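(* Let $\alpha\ge1$ be an ordinal and let $\aleph$ be the cardinality of $\mathrm{Zigzag}_\alpha$. Then every questionable representation of $\mathrm{Zigzag}_\alpha$ has width at least $\aleph$.
   Context: Orders are partial orders. $\mathrm{Zigzag}_\alpha$ is the order on the disjoint elements $s_i,s'_i$ ($i<\alpha$) whose comparabilities are exactly: $s_i<s'_i$ for $i<\alpha$; $s_i<s'_{i+1}$ whenever $i+1<\alpha$; and $s_j<s'_i$ whenever $j<i<\alpha$ and $i$ is a limit ordinal. For an ordinal $j$, $\mathcal O_j=(O_k)_{k<j}$ is a sequence of orders; a word of length $\ell\le j$ is $(x_k)_{k<\ell}$ with $x_k\in\mathrm{Dom}(O_k)$. The question of words $X,Y$ is $(k,x_k,y_k)$ for the least $k<\min(\mathrm{len}X,\mathrm{len}Y)$ with $x_k\neq y_k$, if it exists. For $i<j$, $\mathrm{Next}(i,j,\mathcal O_j)$ is the partial order on words of length $\ell$, $i\le \ell<j$, with $X<Y$ iff their question $(k,x_k,y_k)$ exists and $x_k<y_k$ in $O_k$; otherwise incomparable. A questionable representation of an order $O$ is an injective $f$ into some $\mathrm{Next}(i,j,\mathcal O_j)$ with $f(x)<f(y)\iff x<y$; its width is the supremum of the cardinalities of the $\mathrm{Dom}(O_k)$, $k<j$. *)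

(* Ordinals are represented (up to isomorphism) by well-ordered
   types: an ordinal beta is the well-ordered type of ordinals < beta. *)
From Stdlib Require Import Classical.

Record WOrd : Type := {
  wo_car :> Type;
  wo_lt : wo_car -> wo_car -> Prop;
  wo_trans : forall x y z, wo_lt x y -> wo_lt y z -> wo_lt x z;
  wo_total : forall x y, wo_lt x y \/ x = y \/ wo_lt y x;
  wo_wf : well_founded wo_lt
}.
Arguments wo_lt {w} _ _.

Definition is_succ_of {A : WOrd} (k i : A) : Prop :=
  wo_lt k i /\ ~ (exists m, wo_lt k m /\ wo_lt m i).

Definition is_limit {A : WOrd} (i : A) : Prop :=
  (exists k, wo_lt k i) /\ ~ (exists k, is_succ_of k i).

(** Zigzag_alpha : elements s_i = inl i, s'_i = inr i (i < alpha);
    strict order relation given exactly by the listed comparabilities. *)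
Definition zigzag_dom (A : WOrd) : Type := (A + A)%type.

Definition zigzag_lt (A : WOrd) (x y : zigzag_dom A) : Prop :=
  match x, y with
  | inl j, inr i => j = i \/ is_succ_of j i \/ (wo_lt j i /\ is_limit i)
  | _, _ => False
  end.

Definition strict_po (T : Type) (R : T -> T -> Prop) : Prop :=
  (forall x, ~ R x x) /\ (forall x y z, R x y -> R y z -> R x z).

Definition word (J : WOrd) (D : J -> Type) : Type :=
  { l : J & forall k : J, wo_lt k l -> D k }.

Definition wlen {J D} (X : @word J D) : J := projT1 X.

Definition word_eq {J D} (X Y : @word J D) : Prop :=
  wlen X = wlen Y /\
  forall k p q, projT2 X k p = projT2 Y k q.

(** X < Y in Next: the question (k, x_k, y_k) exists and x_k < y_k in O_k. *)
Definition next_lt {J : WOrd} {D : J -> Type} (R : forall k, D k -> D k -> Prop)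
    (X Y : word J D) : Prop :=
  exists k (pX : wo_lt k (wlen X)) (pY : wo_lt k (wlen Y)),
    projT2 X k pX <> projT2 Y k pY /\
    (forall m (qX : wo_lt m (wlen X)) (qY : wo_lt m (wlen Y)),
        wo_lt m k -> projT2 X m qX = projT2 Y m qY) /\
    R k (projT2 X k pX) (projT2 Y k pY).

(** f is a questionable representation of (P, lt) into Next(i, j, O_j),
    where J is the ordinal j and i : J. *)
Definition questionable_rep {P : Type} (ltP : P -> P -> Prop)
    (J : WOrd) (D : J -> Type) (R : forall k, D k -> D k -> Prop)
    (i : J) (f : P -> word J D) : Prop :=
  (forall x, wlen (f x) = i \/ wo_lt i (wlen (f x))) /\
  (forall x y, word_eq (f x) (f y) -> x = y) /\
  (forall x y, next_lt R (f x) (f y) <-> ltP x y).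

Definition card_le (X Y : Type) : Prop := exists f : X -> Y, forall a b, f a = f b -> a = b.
Definition card_lt (X Y : Type) : Prop := card_le X Y /\ ~ card_le Y X.

(** width = sup_{k<j} |D k| is at least |Z|: for every cardinal |L| < |Z|,
    some |D k| exceeds |L|. *)
Definition width_ge (J : WOrd) (D : J -> Type) (Z : Type) : Prop :=
  forall L : Type, card_lt L Z -> exists k : J, ~ card_le (D k) L.

From Stdlib Require Import Classical ProofIrrelevance.

(** Let [f] be a questionable representation of
    Zigzag_alpha and let [k] be the least level at which two of the words
    [f x] differ.  Every element of Zigzag is comparable to another one, so
    every word [f x] is longer than [k] and we may read off its letter
    [letter x] at level [k].  Whenever two letters differ, the question of the
    two words is asked exactly at level [k]; hence each fiber of [letter] is a
    module (an autonomous set) of the represented order.  Zigzag_alpha is a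
    prime order: its only modules with two distinct elements are the whole
    order.  Since [letter] is not constant, all its fibers are singletons, so
    [letter] injects Zigzag_alpha into the alphabet [D k], which therefore has
    cardinality at least that of Zigzag_alpha. *)

Lemma wo_min {A : WOrd} (Q : A -> Prop) :
  (exists a, Q a) -> exists m, Q m /\ forall k, wo_lt k m -> ~ Q k.
Proof.
  intros [a Ha]. apply NNPP; intro Hnone.
  assert (Hempty : forall b, ~ Q b).
  { intro b. induction b as [b IH] using (well_founded_ind (wo_wf A)).
    intro Hb. apply Hnone. exists b. split; [exact Hb | exact IH]. }
  exact (Hempty a Ha).
Qed.

Lemma wo_irrefl {A : WOrd} (j : A) : ~ wo_lt j j.
Proof.
  induction j as [j IH] using (well_founded_ind (wo_wf A)).
  intro C. exact (IH j C C).
Qed.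

Lemma wo_bottom (A : WOrd) : inhabited A -> exists a0 : A, forall k, ~ wo_lt k a0.
Proof.
  intros [a]. destruct (wo_min (fun _ : A => True) (ex_intro _ a I)) as [a0 [_ Ha0]].
  exists a0. intros k Hk. exact (Ha0 k Hk I).
Qed.

Lemma wo_bottom_le {A : WOrd} (a0 : A) :
  (forall k, ~ wo_lt k a0) -> forall b, b = a0 \/ wo_lt a0 b.
Proof.
  intros Ha0 b. destruct (wo_total A b a0) as [H | [H | H]]; auto.
  exfalso; exact (Ha0 _ H).
Qed.

Lemma succ_or_limit {A : WOrd} (a i : A) :
  wo_lt a i -> (exists k, is_succ_of k i) \/ is_limit i.
Proof.
  intro Hai. destruct (classic (exists k, is_succ_of k i)) as [Hs | Hns]; auto.
  right. split; [exists a; exact Hai | exact Hns].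
Qed.

Lemma letter_pi {J : WOrd} {D : J -> Type} (X : word J D) (k : J)
    (p q : wo_lt k (wlen X)) : projT2 X k p = projT2 X k q.
Proof. f_equal; apply proof_irrelevance. Qed.

(** * Modules and prime orders *)

Definition is_module {T : Type} (lt : T -> T -> Prop) (M : T -> Prop) : Prop :=
  forall x y z, M x -> M y -> ~ M z ->
    (lt x z <-> lt y z) /\ (lt z x <-> lt z y).

Definition is_prime {T : Type} (lt : T -> T -> Prop) : Prop :=
  forall M, is_module lt M -> forall x y, M x -> M y -> x <> y -> forall z, M z.

(** * Zigzag_alpha is prime *)

Section Zigzag.
Variable A : WOrd.

Lemma zigzag_comparable :
  forall x : zigzag_dom A, exists y, zigzag_lt A x y \/ zigzag_lt A y x.
Proof.
  intros [c | c].
  - exists (inr c). left; simpl; auto.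
  - exists (inl c). right; simpl; auto.
Qed.

Lemma zigzag_lt_not_above (j i : A) : zigzag_lt A (inl j) (inr i) -> ~ wo_lt i j.
Proof.
  intros Hji Hij. simpl in Hji.
  destruct Hji as [E | [[Hlt _] | [Hlt _]]].
  - subst; exact (wo_irrefl _ Hij).
  - exact (wo_irrefl _ (wo_trans A _ _ _ Hlt Hij)).
  - exact (wo_irrefl _ (wo_trans A _ _ _ Hlt Hij)).
Qed.

(** Walking down from [s'_b] reaches
    [s_0] (through predecessors, or directly from a limit); walking up from
    [s_0] reaches every [s'_i] by well-founded induction. *)
Lemma zigzag_connected (M : zigzag_dom A -> Prop) :
  (forall u w, M u -> zigzag_lt A u w \/ zigzag_lt A w u -> M w) ->
  (forall a0 : A, (forall k, ~ wo_lt k a0) ->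
   forall b, M (inr b) -> forall z, M z).
Proof.
  intros Mclosed a0 Ha0 b Mb.
  assert (Mbottom : M (inl a0)).
  { clear - Mclosed Ha0 Mb. revert Mb.
    induction b as [b IH] using (well_founded_ind (wo_wf A)). intro Mb.
    destruct (wo_bottom_le a0 Ha0 b) as [E | Hlt].
    - subst. apply (Mclosed (inr a0)); auto. right; simpl; auto.
    - destruct (succ_or_limit a0 b Hlt) as [[k Hk] | Hlim].
      + apply (IH k (proj1 Hk)).
        assert (M (inl k)) by (apply (Mclosed (inr b)); auto; right; simpl; auto).
        apply (Mclosed (inl k)); auto. left; simpl; auto.
      + apply (Mclosed (inr b)); auto. right; simpl; auto. }
  assert (Mtop : forall i, M (inr i)).
  { intro i. induction i as [i IH] using (well_founded_ind (wo_wf A)).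
    destruct (wo_bottom_le a0 Ha0 i) as [E | Hlt].
    - subst. apply (Mclosed (inl a0)); auto. left; simpl; auto.
    - destruct (succ_or_limit a0 i Hlt) as [[k Hk] | Hlim].
      + assert (M (inl k)).
        { apply (Mclosed (inr k)); [exact (IH k (proj1 Hk)) |]. right; simpl; auto. }
        apply (Mclosed (inl k)); auto. left; simpl; auto.
      + apply (Mclosed (inl a0)); auto. left; simpl; auto. }
  intros [z | z]; auto.
  apply (Mclosed (inr z)); auto. right; simpl; auto.
Qed.

Section ZigzagModule.
Variable M : zigzag_dom A -> Prop.
Hypothesis M_module : is_module (zigzag_lt A) M.

(** A module containing [s_j] and [s_j'] with [j < j'] contains [s'_j]:
    otherwise [s'_j] would distinguish them, since [s_j < s'_j] but not
    [s_j' < s'_j]. *)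
Lemma module_bottom_pair (j j' : A) :
  wo_lt j j' -> M (inl j) -> M (inl j') -> M (inr j).
Proof.
  intros Hjj' Mj Mj'. apply NNPP; intro Hout.
  destruct (M_module _ _ _ Mj Mj' Hout) as [Hdist _].
  apply (zigzag_lt_not_above j' j); [| exact Hjj'].
  apply Hdist; simpl; auto.
Qed.

Lemma module_top_pair (j j' : A) :
  wo_lt j j' -> M (inr j) -> M (inr j') -> M (inl j').
Proof.
  intros Hjj' Mj Mj'. apply NNPP; intro Hout.
  destruct (M_module _ _ _ Mj' Mj Hout) as [_ Hdist].
  apply (zigzag_lt_not_above j' j); [| exact Hjj'].
  apply Hdist; simpl; auto.
Qed.

Lemma module_both_levels (x y : zigzag_dom A) :
  M x -> M y -> x <> y -> (exists a, M (inl a)) /\ (exists b, M (inr b)).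
Proof.
  intros Mx My Hxy.
  destruct x as [j | j], y as [j' | j']; try (split; eexists; eassumption).
  - destruct (wo_total A j j') as [H | [E | H]]; [| subst; congruence |];
      split; eexists; eauto using module_bottom_pair.
  - destruct (wo_total A j j') as [H | [E | H]]; [| subst; congruence |];
      split; eexists; eauto using module_top_pair.
Qed.

(** A module meeting both levels is closed under comparability: an element
    outside [M] comparable to [u] in [M] would have to be comparable to an
    element of [M] of the same level as [u], which is impossible. *)
Lemma module_closed :
  (exists a, M (inl a)) -> (exists b, M (inr b)) ->
  forall u w, M u -> zigzag_lt A u w \/ zigzag_lt A w u -> M w.
Proof.
  intros [a Ma] [b Mb] u w Mu Huw. apply NNPP; intro Hout.
  destruct u as [c | c], w as [d | d]; simpl in Huw.
  - destruct Huw as [[] | []].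
  - destruct Huw as [Huw | []].
    exact (proj1 (proj1 (M_module _ _ _ Mu Mb Hout)) Huw).
  - destruct Huw as [[] | Huw].
    exact (proj1 (proj2 (M_module _ _ _ Mu Ma Hout)) Huw).
  - destruct Huw as [[] | []].
Qed.
End ZigzagModule.

Lemma zigzag_prime : inhabited A -> is_prime (zigzag_lt A).
Proof.
  intros HA M Mmod x y Mx My Hxy.
  destruct (wo_bottom A HA) as [a0 Ha0].
  destruct (module_both_levels M Mmod x y Mx My Hxy) as [Hbot [b Mb]].
  exact (zigzag_connected M (module_closed M Mmod Hbot (ex_intro _ b Mb)) a0 Ha0 b Mb).
Qed.
End Zigzag.

(** * The least splitting level of a questionable representation *)

Section FirstSplit.
Variables (P : Type) (ltP : P -> P -> Prop).
Variables (J : WOrd) (D : J -> Type) (R : forall k, D k -> D k -> Prop).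
Variable f : P -> word J D.
Hypothesis f_rep : forall x y, next_lt R (f x) (f y) <-> ltP x y.

Definition splits_at (k : J) : Prop :=
  exists x y (px : wo_lt k (wlen (f x))) (py : wo_lt k (wlen (f y))),
    projT2 (f x) k px <> projT2 (f y) k py.

Lemma next_lt_splits (x y : P) :
  next_lt R (f x) (f y) ->
  exists k, splits_at k /\ wo_lt k (wlen (f x)) /\ wo_lt k (wlen (f y)).
Proof.
  intros [k [px [py [Hdiff _]]]].
  exists k. split; [exists x, y, px, py; exact Hdiff | auto].
Qed.

Lemma least_split_exists :
  (exists x y, ltP x y) ->
  exists k, splits_at k /\ forall m, wo_lt m k -> ~ splits_at m.
Proof.
  intros [x [y Hxy]].
  destruct (next_lt_splits x y (proj2 (f_rep x y) Hxy)) as [k [Hk _]].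
  exact (wo_min splits_at (ex_intro _ k Hk)).
Qed.

Variable k : J.
Hypothesis k_splits : splits_at k.
Hypothesis k_least : forall m, wo_lt m k -> ~ splits_at m.
Hypothesis ltP_comparable : forall x, exists y, ltP x y \/ ltP y x.

Lemma agree_below (m : J) (x y : P) (px : wo_lt m (wlen (f x)))
    (py : wo_lt m (wlen (f y))) :
  wo_lt m k -> projT2 (f x) m px = projT2 (f y) m py.
Proof.
  intro Hm. apply NNPP; intro Hdiff.
  apply (k_least m Hm). exists x, y, px, py; exact Hdiff.
Qed.

(** Every word is longer than [k], since it is compared with some other
    word at a splitting level, which is at least [k]. *)
Lemma long_words (x : P) : wo_lt k (wlen (f x)).
Proof.
  destruct (ltP_comparable x) as [y [Hxy | Hyx]];
    [ destruct (next_lt_splits x y (proj2 (f_rep x y) Hxy)) as [k' [Hk' [Hlen _]]]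
    | destruct (next_lt_splits y x (proj2 (f_rep y x) Hyx)) as [k' [Hk' [_ Hlen]]] ];
    destruct (wo_total J k' k) as [H | [E | H]];
    solve [ exfalso; exact (k_least k' H Hk')
          | subst; exact Hlen
          | exact (wo_trans J _ _ _ H Hlen) ].
Qed.

Definition letter (x : P) : D k := projT2 (f x) k (long_words x).

(** When two letters differ, the question is asked at level [k], so the
    order between [x] and [z] is the order between their letters. *)
Lemma ltP_letter (x z : P) :
  letter x <> letter z -> (ltP x z <-> R k (letter x) (letter z)).
Proof.
  intro Hne. rewrite <- f_rep. split.
  - intros [k' [px [pz [Hdiff [Hbelow HR]]]]].
    destruct (wo_total J k' k) as [H | [E | H]].
    + exfalso; exact (Hdiff (agree_below k' x z px pz H)).
    + subst k'. unfold letter.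
      rewrite (letter_pi (f x) k _ px), (letter_pi (f z) k _ pz). exact HR.
    + exfalso; exact (Hne (Hbelow k (long_words x) (long_words z) H)).
  - intro HR. exists k, (long_words x), (long_words z).
    split; [exact Hne |]. split; [| exact HR].
    intros m qx qz Hm. exact (agree_below m x z qx qz Hm).
Qed.

Lemma letter_fiber_module (c : D k) : is_module ltP (fun z => letter z = c).
Proof.
  intros u v w Hu Hv Hw.
  assert (Huw : letter u <> letter w) by congruence.
  assert (Hvw : letter v <> letter w) by congruence.
  split.
  - rewrite (ltP_letter u w Huw), (ltP_letter v w Hvw), Hu, Hv. reflexivity.
  - rewrite (ltP_letter w u (not_eq_sym Huw)), (ltP_letter w v (not_eq_sym Hvw)), Hu, Hv.
    reflexivity.
Qed.

Lemma letter_not_constant : exists x y, letter x <> letter y.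
Proof.
  destruct k_splits as [x [y [px [py Hdiff]]]]. exists x, y.
  unfold letter. rewrite (letter_pi (f x) k _ px), (letter_pi (f y) k _ py).
  exact Hdiff.
Qed.

(** For a prime order, [letter] is injective: a fiber with two elements
    would be the whole order, making [letter] constant. *)
Lemma letter_injective : is_prime ltP -> forall x y, letter x = letter y -> x = y.
Proof.
  intros Hprime x y Exy. apply NNPP; intro Hxy.
  assert (Hall : forall z, letter z = letter x)
    by exact (Hprime _ (letter_fiber_module (letter x)) x y eq_refl (eq_sym Exy) Hxy).
  destruct letter_not_constant as [u [v Huv]].
  apply Huv. rewrite (Hall u), (Hall v). reflexivity.
Qed.

Lemma prime_card_le_alphabet : is_prime ltP -> card_le P (D k).
Proof. intro Hprime. exists letter. exact (letter_injective Hprime). Qed.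
End FirstSplit.


Theorem lemma7p1 :
  forall (A : WOrd), inhabited A ->
  forall (J : WOrd) (D : J -> Type) (R : forall k, D k -> D k -> Prop)
         (i : J) (f : zigzag_dom A -> word J D),
    (forall k, strict_po (D k) (R k)) ->
    questionable_rep (zigzag_lt A) J D R i f ->
    width_ge J D (zigzag_dom A).
Proof.
  intros A HA J D R i f _ [_ [_ Hrep]] L [_ HnotZL].
  assert (Hpair : exists x y, zigzag_lt A x y).
  { destruct HA as [a]. exists (inl a), (inr a). simpl; auto. }
  destruct (least_split_exists _ _ J D R f Hrep Hpair) as [k [Hk Hleast]].
  destruct (prime_card_le_alphabet _ _ J D R f Hrep k Hk Hleast
              (zigzag_comparable A) (zigzag_prime A HA)) as [h Hh].
  exists k. intros [g Hg]. apply HnotZL.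
  exists (fun z => g (h z)). intros u v E. exact (Hh u v (Hg _ _ E)).
Qed.
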